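(* Every symmetric group $(G,r)$ of finite multipermutation level $\mathrm{mpl}(G,r)=m$ is a solvable group whose derived (solvable) length is at most $m$.
   Context: A symmetric group is a pair $(G,r)$, $G$ a group, $r(u,v)=({}^uv,u^v)$ an involutive bijection of $G\times G$ with ${}^a1=1,{}^1u=u,1^u=1,a^1=a$, ${}^{ab}u={}^a({}^bu)$, $a^{uv}=(a^u)^v$, ${}^a(uv)=({}^au)({}^{a^u}v)$, $(ab)^u=(a^{{}^bu})(b^u)$, $uv=({}^uv)(u^v)$; it is a non-degenerate symmetric set (non-degenerate involutive solution of the Yang–Baxter equation). For a non-degenerate symmetric set $(X,r)$, the retraction $\mathrm{Ret}(X,r)$ is $X/\!\sim$, where $x\sim y$ iff ${}^xz={}^yz$ for all $z\in X$, with $r_{[X]}([x],[y])=([{}^xy],[x^y])$; $\mathrm{Ret}^m$ is its $m$-fold iterate and $\mathrm{mpl}(X,r)=m$ if $m$ is minimal with $\mathrm{Ret}^m(X,r)$ a one-element set. *)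

Set Implicit Arguments.

Record is_group (G : Type) (mul : G -> G -> G) (one : G) (inv : G -> G) : Prop := {
  grp_assoc : forall a b c, mul a (mul b c) = mul (mul a b) c;
  grp_mul1g : forall a, mul one a = a;
  grp_mulg1 : forall a, mul a one = a;
  grp_mulVg : forall a, mul (inv a) a = one;
  grp_mulgV : forall a, mul a (inv a) = one
}.

(* A symmetric group (G, r) with r(u,v) = (lact u v, ract u v), i.e.
   lact u v = ^u v  and  ract u v = u^v. *)
Record is_symmetric_group (G : Type) (mul : G -> G -> G) (one : G) (inv : G -> G)
    (lact ract : G -> G -> G) : Prop := {
  sg_group : is_group mul one inv;
  (* r is involutive (hence a bijection of G x G) *)
  sg_invol_l : forall u v, lact (lact u v) (ract u v) = u;
  sg_invol_r : forall u v, ract (lact u v) (ract u v) = v;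
  sg_lact_a1 : forall a, lact a one = one;
  sg_lact_1u : forall u, lact one u = u;
  sg_ract_1u : forall u, ract one u = one;
  sg_ract_a1 : forall a, ract a one = a;
  sg_lact_mul : forall a b u, lact (mul a b) u = lact a (lact b u);
  sg_ract_mul : forall a u v, ract a (mul u v) = ract (ract a u) v;
  sg_lact_hom : forall a u v, lact a (mul u v) = mul (lact a u) (lact (ract a u) v);
  sg_ract_hom : forall a b u, ract (mul a b) u = mul (ract a (lact b u)) (ract b u);
  sg_mul_r : forall u v, mul u v = mul (lact u v) (ract u v)
}.

(* Iterated retraction, with Ret^k(G,r) represented as the quotient of G by
   the equivalence ret_rel k:  ret_rel 0 is equality on G, and
   [x]_k ~ [y]_k in Ret(Ret^k) iff ^[x] [z] = ^[y] [z] for all classes [z],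
   i.e. iff [^x z]_k = [^y z]_k for all z in G. *)
Fixpoint ret_rel (G : Type) (lact : G -> G -> G) (k : nat) : G -> G -> Prop :=
  match k with
  | O => fun x y => x = y
  | S k' => fun x y => forall z, ret_rel lact k' (lact x z) (lact y z)
  end.

Definition ret_trivial (G : Type) (lact : G -> G -> G) (k : nat) : Prop :=
  forall x y : G, ret_rel lact k x y.

Definition mpl_eq (G : Type) (lact : G -> G -> G) (m : nat) : Prop :=
  ret_trivial lact m /\ forall k, k < m -> ~ ret_trivial lact k.

Inductive comm_sub (G : Type) (mul : G -> G -> G) (one : G) (inv : G -> G)
    (H : G -> Prop) : G -> Prop :=
| cs_comm : forall x y, H x -> H y ->
    comm_sub mul one inv H (mul (mul (inv x) (inv y)) (mul x y))
| cs_one : comm_sub mul one inv H one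
| cs_mul : forall a b, comm_sub mul one inv H a -> comm_sub mul one inv H b ->
    comm_sub mul one inv H (mul a b)
| cs_inv : forall a, comm_sub mul one inv H a -> comm_sub mul one inv H (inv a).

Fixpoint derived (G : Type) (mul : G -> G -> G) (one : G) (inv : G -> G)
    (n : nat) : G -> Prop :=
  match n with
  | O => fun _ => True
  | S n' => comm_sub mul one inv (derived mul one inv n')
  end.

Definition solvable_length_le (G : Type) (mul : G -> G -> G) (one : G)
    (inv : G -> G) (n : nat) : Prop :=
  forall g, derived mul one inv n g -> g = one.

(* The k-th retraction Ret^k(G,r) is the quotient of G by [ret_rel lact k],
   and each of these relations is a congruence for the product, the inverse
   and the left action: passing from a congruence E to
   [lift E x y := forall z, E (^x z) (^y z)] preserves all three properties.
   If x and y act trivially modulo E, then ^x y ~ y and x^y ~ x, so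
   xy = (^x y)(x^y) ~ yx and the commutator of x and y is E-trivial.  Since
   x ~ 1 in Ret^(k+1) means exactly that x acts trivially on Ret^k, induction
   along the derived series shows that G^(j) is trivial in Ret^(m-j); for
   j = m this is the equality G^(m) = 1. *)
From Stdlib Require Import Arith.

Set Implicit Arguments.

Section SymmetricGroup.

Variables (G : Type) (mul : G -> G -> G) (one : G) (inv : G -> G)
  (lact ract : G -> G -> G).
Hypothesis HS : is_symmetric_group mul one inv lact ract.

Let HG := sg_group HS.
Let mulgA := grp_assoc HG.
Let mul1g := grp_mul1g HG.
Let mulg1 := grp_mulg1 HG.
Let mulVg := grp_mulVg HG.
Let mulgV := grp_mulgV HG.

Lemma inv_one : inv one = one.
Proof. rewrite <- (mul1g (inv one)). apply mulgV. Qed.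

Lemma lactVK x z : lact (inv x) (lact x z) = z.
Proof. rewrite <- (sg_lact_mul HS), mulVg. apply (sg_lact_1u HS). Qed.

Lemma lactKV x z : lact x (lact (inv x) z) = z.
Proof. rewrite <- (sg_lact_mul HS), mulgV. apply (sg_lact_1u HS). Qed.

Lemma ract_mulE u v : ract u v = mul (inv (lact u v)) (mul u v).
Proof. rewrite (sg_mul_r HS u v), mulgA, mulVg, mul1g. reflexivity. Qed.

Record congruence (E : G -> G -> Prop) : Prop := {
  cong_refl : forall a, E a a;
  cong_sym : forall a b, E a b -> E b a;
  cong_trans : forall a b c, E a b -> E b c -> E a c;
  cong_mul : forall a a' b b', E a a' -> E b b' -> E (mul a b) (mul a' b');
  cong_inv : forall a a', E a a' -> E (inv a) (inv a');
  cong_lact : forall a a' b b', E a a' -> E b b' -> E (lact a b) (lact a' b')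
}.

Definition lift (E : G -> G -> Prop) (x y : G) : Prop :=
  forall z, E (lact x z) (lact y z).

Section Lift.

Variable E : G -> G -> Prop.
Hypothesis CE : congruence E.

Lemma lift_refl a : lift E a a.
Proof. intro z. apply (cong_refl CE). Qed.

Lemma lift_sym a b : lift E a b -> lift E b a.
Proof. intros Hab z. apply (cong_sym CE), Hab. Qed.

Lemma lift_trans a b c : lift E a b -> lift E b c -> lift E a c.
Proof. intros Hab Hbc z. apply (cong_trans CE) with (lact b z); auto. Qed.

Lemma lift_of_rel a b : E a b -> lift E a b.
Proof. intros Hab z. apply (cong_lact CE); [exact Hab | apply (cong_refl CE)]. Qed.

Lemma lift_one_lact a b : lift E a one -> E (lact a b) b.
Proof. intro Ha. rewrite <- (sg_lact_1u HS b) at 2. apply Ha. Qed.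

Lemma lift_mul a a' b b' : lift E a a' -> lift E b b' -> lift E (mul a b) (mul a' b').
Proof.
  intros Ha Hb z. rewrite !(sg_lact_mul HS).
  apply (cong_trans CE) with (lact a (lact b' z)).
  - apply (cong_lact CE); [apply (cong_refl CE) | apply Hb].
  - apply Ha.
Qed.

Lemma lift_inv a a' : lift E a a' -> lift E (inv a) (inv a').
Proof.
  intros Ha z. rewrite <- (lactKV a' z) at 1.
  apply (cong_trans CE) with (lact (inv a) (lact a (lact (inv a') z))).
  - apply (cong_lact CE); [apply (cong_refl CE) |]. apply (cong_sym CE), Ha.
  - rewrite lactVK. apply (cong_refl CE).
Qed.

(* With
   t := w s w^-1 (which acts trivially like s), ^t w ~ w forces t^w ~ s, and
   involutivity of r gives t = ^(^t w) (t^w) ~ ^w s. *)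
Lemma lift_one_lact_stable w s : lift E s one -> lift E (lact w s) one.
Proof.
  intro Hs.
  set (t := mul (mul w s) (inv w)).
  assert (Ht : lift E t one).
  { assert (H : lift E t (mul (mul w one) (inv w))).
    { apply lift_mul; [apply lift_mul |]; auto using lift_refl. }
    now rewrite mulg1, mulgV in H. }
  assert (Htw : E (lact t w) w) by apply lift_one_lact, Ht.
  assert (Hrtw : E (ract t w) s).
  { rewrite ract_mulE.
    apply (cong_trans CE) with (mul (inv w) (mul t w)).
    - apply (cong_mul CE); [apply (cong_inv CE), Htw | apply (cong_refl CE)].
    - replace (mul (inv w) (mul t w)) with s; [apply (cong_refl CE) |].
      unfold t. rewrite <- !mulgA, mulVg, mulg1, mulgA, mulVg, mul1g. reflexivity. }
  assert (Hts : E t (lact w s)).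
  { rewrite <- (sg_invol_l HS t w) at 1. apply (cong_lact CE); assumption. }
  apply lift_trans with t; [apply lift_of_rel, (cong_sym CE), Hts | exact Ht].
Qed.

(* Writing y' = y s with s := y^-1 y' acting trivially,
   ^x' y' = (^x' y) (^(x'^y) s) and the second factor acts trivially. *)
Lemma lift_lact x x' y y' :
  lift E x x' -> lift E y y' -> lift E (lact x y) (lact x' y').
Proof.
  intros Hx Hy.
  apply lift_trans with (lact x' y); [apply lift_of_rel, Hx |].
  set (s := mul (inv y) y').
  assert (Hs : lift E s one).
  { unfold s. replace one with (mul (inv y) y) by apply mulVg.
    apply lift_mul; [apply lift_refl | apply lift_sym, Hy]. }
  replace y' with (mul y s) by (unfold s; now rewrite mulgA, mulgV, mul1g).
  rewrite (sg_lact_hom HS).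
  replace (lact x' y) with (mul (lact x' y) one) at 1 by apply mulg1.
  apply lift_mul; [apply lift_refl |].
  apply lift_sym, lift_one_lact_stable, Hs.
Qed.

Lemma congruence_lift : congruence (lift E).
Proof.
  split.
  - exact lift_refl.
  - exact lift_sym.
  - exact lift_trans.
  - exact lift_mul.
  - exact lift_inv.
  - exact lift_lact.
Qed.

Lemma commutator_rel_one x y : lift E x one -> lift E y one ->
  E (mul (mul (inv x) (inv y)) (mul x y)) one.
Proof.
  intros Hx Hy.
  assert (Hxy : E (lact x y) y) by apply lift_one_lact, Hx.
  assert (Hrxy : E (ract x y) x).
  { rewrite <- (sg_invol_l HS x y) at 2.
    apply (cong_sym CE), (cong_trans CE) with (lact y (ract x y)).
    - apply (cong_lact CE); [exact Hxy | apply (cong_refl CE)].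
    - apply lift_one_lact, Hy. }
  apply (cong_trans CE) with (mul (mul (inv x) (inv y)) (mul y x)).
  - apply (cong_mul CE); [apply (cong_refl CE) |]. rewrite (sg_mul_r HS x y).
    apply (cong_mul CE); assumption.
  - replace (mul (mul (inv x) (inv y)) (mul y x)) with one; [apply (cong_refl CE) |].
    rewrite <- mulgA, (mulgA (inv y)), mulVg, mul1g, mulVg. reflexivity.
Qed.

End Lift.

Lemma congruence_ret_rel n : congruence (ret_rel lact n).
Proof.
  induction n as [|n IH].
  - split; simpl; intros; subst; reflexivity.
  - exact (congruence_lift IH).
Qed.

Lemma derived_ret_rel_one j : forall n, ret_trivial lact (n + j) ->
  forall g, derived mul one inv j g -> ret_rel lact n g one.
Proof.
  induction j as [|j IH]; intros n Htriv g Hg.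
  - rewrite Nat.add_0_r in Htriv. apply Htriv.
  - rewrite Nat.add_succ_r in Htriv.
    pose proof (congruence_ret_rel n) as C.
    induction Hg as [x y Hx Hy | | a b _ Ha _ Hb | a _ Ha].
    + apply (commutator_rel_one C); apply (IH (S n) Htriv); assumption.
    + apply (cong_refl C).
    + rewrite <- mulg1. apply (cong_mul C); assumption.
    + rewrite <- inv_one. apply (cong_inv C); assumption.
Qed.

End SymmetricGroup.

Theorem mainTheorem7 (G : Type) (mul : G -> G -> G) (one : G) (inv : G -> G)
    (lact ract : G -> G -> G) (m : nat) :
  is_symmetric_group mul one inv lact ract ->
  mpl_eq lact m ->
  solvable_length_le mul one inv m.
Proof.
  intros HS [Htriv _] g Hg.
  exact (derived_ret_rel_one HS m 0 Htriv g Hg).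
Qed.
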